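(* Let $T$ be a quasi-binary tree with $|V(T)|>1$ and vertex weight function $\omega:V(T)\to\mathbb{R}$. Let $\gamma,\eta\in\mathbb{R}$ be such that $\gamma\ge\omega_3$ and $$\max\left\{\frac{\omega_1-\gamma}{2},\ \omega_2-\gamma\right\}\le \eta\le \frac{\omega(T)}{2}.$$ Then there exists an edge $e\in E(T)$ such that, denoting by $C_e^1, C_e^2$ the two connected components of $T\setminus\{e\}$, we have $$\eta\le \omega(C_e^i)\le 2\eta+\gamma$$ for some $i\in\{1,2\}$.
   Context: A binary tree is a tree in which every vertex has degree $3$, except for pending vertices (degree $1$) and one root vertex (degree $2$). A tree is quasi-binary if it is a connected subgraph of a binary tree; in particular every vertex has degree $1$, $2$ or $3$. For a subgraph $H$ write $\omega(H)=\sum_{v\in V(H)}\omega(v)$. For $i=1,2,3$ let $V_i$ be the set of vertices of degree $i$, and let $\omega_i=\max\{\omega(v): v\in V_j \text{ for some } j \text{ with } i\le j\le 3\}$ (the maximum weight of a vertex of degree at least $i$). *)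

From mathcomp Require Import all_boot all_order all_algebra.
Set Implicit Arguments. Unset Strict Implicit. Unset Printing Implicit Defensive.
Import Order.TTheory GRing.Theory Num.Theory.
Local Open Scope ring_scope.

Definition simple_graph (V : finType) (e : rel V) : Prop :=
  symmetric e /\ irreflexive e.

Definition deg (V : finType) (e : rel V) (v : V) : nat := #|[pred u | e v u]|.

Definition connected_graph (V : finType) (e : rel V) : Prop :=
  forall x y : V, connect e x y.

Definition acyclic (V : finType) (e : rel V) : Prop :=
  forall c : seq V, uniq c -> cycle e c -> (size c < 3)%N.

Definition is_tree (V : finType) (e : rel V) : Prop :=
  [/\ simple_graph e, connected_graph e & acyclic e].

Definition binary_tree (B : finType) (eB : rel B) : Prop :=
  is_tree eB /\
  exists r : B, deg eB r = 2%N /\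
    forall v : B, v != r -> deg eB v = 1%N \/ deg eB v = 3%N.

Definition quasi_binary (V : finType) (e : rel V) : Prop :=
  is_tree e /\
  exists (B : finType) (eB : rel B) (f : V -> B),
    [/\ binary_tree eB, injective f & forall x y, e x y -> eB (f x) (f y)].

Definition wset (V : finType) (R : numDomainType) (w : V -> R) (A : {set V}) : R :=
  \sum_(v in A) w v.

(* "omega_i <= x": every vertex of degree at least i has weight <= x,
   i.e. the maximum weight over vertices of degree >= i is at most x
   (vacuous when there is no such vertex: max of the empty set = -oo). *)
Definition omega_le (V : finType) (e : rel V) (R : numDomainType)
  (w : V -> R) (i : nat) (x : R) : Prop :=
  forall v : V, (i <= deg e v)%N -> w v <= x.

Definition remove_edge (V : finType) (e : rel V) (u v : V) : rel V :=
  fun x y => e x y && ~~ (((x == u) && (y == v)) || ((x == v) && (y == u))).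

Definition comp_after_removal (V : finType) (e : rel V) (u v x : V) : {set V} :=
  [set y | connect (remove_edge e u v) x y].

From mathcomp Require Import all_boot all_order all_algebra.
From mathcomp Require Import lra.
Import Order.TTheory GRing.Theory Num.Theory.
Local Open Scope ring_scope.

(* Orient every edge: [side a b] is the component of [a] once [ab] is removed.
   Among the oriented edges whose side has weight at least eta, pick (a, b) with
   the side of least cardinality.  The side of (a, b) is [a] together with the
   disjoint sides of (x, a) for the other neighbours x of a; these are strictly
   smaller, hence of weight < eta.  As a has at most two such neighbours, the
   side of (a, b) weighs at most w a + (deg a - 1) eta, and the three degree
   hypotheses on eta turn this into the bound 2 eta + gamma. *)

Section TreeSides.
Set Implicit Arguments. Unset Strict Implicit.

Variables (V : finType) (e : rel V).
Hypothesis e_sym : symmetric e.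
Hypothesis e_irr : irreflexive e.
Hypothesis e_connected : connected_graph e.
Hypothesis e_acyclic : acyclic e.

Local Notation side u v := (comp_after_removal e u v u).

Definition avoiding (v : V) : rel V := fun a b => [&& e a b, a != v & b != v].

Definition children (a b : V) : {set V} := [set x | e a x] :\ b.

Lemma remove_edge_sub u v : subrel (remove_edge e u v) e.
Proof. by move=> x y /andP []. Qed.

Lemma remove_edge_sym u v : symmetric (remove_edge e u v).
Proof.
move=> x y; rewrite /remove_edge e_sym.
by case: (x == u); case: (y == v); case: (x == v); case: (y == u).
Qed.

Lemma remove_edgeC u v : remove_edge e v u =2 remove_edge e u v.
Proof. by move=> x y; rewrite /remove_edge orbC. Qed.

Lemma avoiding_sym v : symmetric (avoiding v).
Proof.
by move=> x y; rewrite /avoiding e_sym; case: (x != v); case: (y != v); rewrite ?andbF.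
Qed.

Lemma edge_neq a b : e a b -> a != b.
Proof. by apply: contraTneq => ->; rewrite e_irr. Qed.

Lemma remove_edge_disconnects u v : e u v -> ~~ connect (remove_edge e u v) u v.
Proof.
move=> euv; apply/negP => /connectP [p0 pp0 lp0].
case/shortenP: pp0 lp0 => p pp up _ lp.
have cyc : cycle e (u :: p).
  by rewrite /= rcons_path (sub_path (@remove_edge_sub u v) pp) -lp e_sym.
have := e_acyclic up cyc.
case: p pp {up cyc} lp => [|x [|z q]] //= => [_ vu | /andP [Eux _] vx].
  by move: euv; rewrite -vu e_irr.
by move: Eux; rewrite -vx /remove_edge !eqxx andbF.
Qed.

Lemma remove_edge_connect_ends u v y : e u v ->
  connect (remove_edge e u v) u y || connect (remove_edge e u v) v y.
Proof.
move=> euv; set c := connect (remove_edge e u v).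
have /connectP [p pp ->] := e_connected u y.
suff reach : forall q a, path e a q -> c u a || c v a -> c u (last a q) || c v (last a q).
  by apply: reach pp _; rewrite /c connect0.
elim=> [|b q IH] a //= /andP [eab pq] ca; apply: IH pq _.
have [Eab|] := boolP (remove_edge e u v a b).
  by case/orP: ca => ca; rewrite /c (connect_trans ca (connect1 Eab)) ?orbT.
by rewrite /remove_edge eab negbK => /orP [] /andP [_ /eqP ->]; rewrite /c connect0 ?orbT.
Qed.

Lemma side_swap u v : e u v -> side v u = ~: side u v.
Proof.
move=> euv; apply/setP => y; rewrite !inE (eq_connect (remove_edgeC u v)).
have := remove_edge_connect_ends y euv.
have [cuy|] //= := boolP (connect _ u y) => _; apply/negP => cvy.
have := remove_edge_disconnects euv.
by rewrite (connect_trans cuy) // (sym_connect_sym (@remove_edge_sym u v)).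
Qed.

Lemma wset_sides (R : numDomainType) (w : V -> R) u v : e u v ->
  wset w (side u v) + wset w (side v u) = wset w [set: V].
Proof.
by move=> euv; rewrite (side_swap euv) /wset [RHS](big_setID (side u v)) setTI setTD.
Qed.

Lemma avoiding_path_notin v x p : path (avoiding v) x p -> v \notin p.
Proof.
elim: p x => [|b p IH] x //= /andP [/and3P [_ _ bv] pp].
by rewrite inE negb_or eq_sym bv (IH b).
Qed.

Lemma avoiding_connect_neq v x y : x != v -> connect (avoiding v) x y -> y != v.
Proof.
move=> xv /connectP [p pp ->]; have := mem_last x p.
rewrite inE => /orP [/eqP -> //|]; apply: contraTneq => ->.
exact: avoiding_path_notin pp.
Qed.

Lemma path_avoiding (r : rel V) v x p :
  subrel r e -> path r x p -> v \notin x :: p -> path (avoiding v) x p.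
Proof.
move=> sub_r; elim: p x => [|b p IH] x //= /andP [rxb pp].
rewrite !inE !negb_or => /and3P [xv bv np].
by rewrite /avoiding sub_r // eq_sym xv eq_sym bv IH // inE negb_or bv.
Qed.

Lemma avoiding_sub_remove_edge u v : subrel (avoiding v) (remove_edge e u v).
Proof.
by move=> a b /and3P [eab av bv]; rewrite /remove_edge eab (negbTE av) (negbTE bv) !andbF.
Qed.

Lemma side_avoiding x v : e x v -> side x v = [set y | connect (avoiding v) x y].
Proof.
move=> exv; apply/setP => y; rewrite !inE.
apply/idP/idP => /connectP [p pp ->]; apply/connectP; exists p => //.
  have v_notin : v \notin x :: p.
    by apply/negP => vin; have := remove_edge_disconnects exv; rewrite (path_connect pp vin).
  exact: path_avoiding (@remove_edge_sub x v) pp v_notin.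
by apply: sub_path pp; apply: avoiding_sub_remove_edge.
Qed.

Lemma mem_side a b : a \in side a b.
Proof. by rewrite inE connect0. Qed.

Lemma side_notin_parent x a : e x a -> a \notin side x a.
Proof.
move=> exa; rewrite side_avoiding // inE; apply/negP.
by move/(avoiding_connect_neq (edge_neq exa)); rewrite eqxx.
Qed.

Lemma children_edge a b x : x \in children a b -> e x a.
Proof. by rewrite !inE e_sym => /andP []. Qed.

Lemma card_children a b : e a b -> (#|children a b|.+1 = deg e a)%N.
Proof.
move=> eab; have -> : deg e a = #|[set x | e a x]| by apply: eq_card => x; rewrite inE.
by rewrite (cardsD1 b [set x | e a x]) inE eab.
Qed.

Lemma side_child_sub a b x : e a b -> x \in children a b -> side x a \subset side a b.
Proof.
move=> eab xN; have := xN; rewrite !inE => /andP [xb eax].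
rewrite side_avoiding ?(children_edge xN) //; apply/subsetP => y; rewrite !inE.
have Eax : remove_edge e a b a x.
  by rewrite /remove_edge eax eqxx (negbTE xb) (negbTE (edge_neq eab)).
move=> /connectP [p pp ->]; apply: connect_trans (connect1 Eax) _.
apply/connectP; exists p => //; apply: sub_path pp => c d cd.
by rewrite -remove_edgeC; apply: avoiding_sub_remove_edge.
Qed.

Lemma side_child_proper a b x : e a b -> x \in children a b -> side x a \proper side a b.
Proof.
move=> eab xN; apply/properP; split; first exact: side_child_sub.
by exists a; [exact: mem_side | exact: side_notin_parent (children_edge xN)].
Qed.

Lemma side_children a b y : e a b -> y \in side a b -> y != a ->
  exists2 x, x \in children a b & y \in side x a.
Proof.
move=> eab; rewrite inE => /connectP [p0 pp0 ->].
case/shortenP: pp0 => -[|x q] /=; first by rewrite eqxx.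
move=> /andP [Eax pq] /andP [aq _] _ _.
have eax := remove_edge_sub Eax.
exists x.
  rewrite !inE eax andbT; move: Eax; rewrite /remove_edge eqxx /= eax /=.
  by apply: contra => /eqP ->; rewrite eqxx.
rewrite side_avoiding 1?e_sym // inE; apply/connectP; exists q => //.
exact: path_avoiding (@remove_edge_sub a b) pq aq.
Qed.

(* Two children sides meeting would close a cycle through [a]. *)
Lemma sides_disjoint a x1 x2 : e a x1 -> e a x2 -> x1 != x2 ->
  [disjoint side x1 a & side x2 a].
Proof.
move=> e1 e2 n12; have e1' : e x1 a by rewrite e_sym.
have e2' : e x2 a by rewrite e_sym.
rewrite !side_avoiding //; apply/pred0P => y /=; rewrite !inE.
apply/negP => /andP [c1 c2].
have /connectP [p0 pp0 l0] : connect (avoiding a) x1 x2.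
  by rewrite (connect_trans c1) // (sym_connect_sym (@avoiding_sym a)).
case/shortenP: pp0 l0 => p pp up _ l.
have ua : a \notin x1 :: p.
  by rewrite inE negb_or eq_sym (edge_neq e1') (avoiding_path_notin pp).
have cyc : cycle e (a :: x1 :: p).
  by rewrite /= e1 rcons_path -l e2' andbT (sub_path _ pp) // => u v /and3P [].
have := e_acyclic _ cyc; rewrite cons_uniq ua up => /(_ isT).
by case: p {pp up ua cyc} l => [|z q] //= l; rewrite l eqxx in n12.
Qed.

Lemma wset_side (R : numDomainType) (w : V -> R) a b : e a b ->
  wset w (side a b) = w a + \sum_(x in children a b) wset w (side x a).
Proof.
move=> eab.
have side_cup : side a b = a |: \bigcup_(x in children a b) side x a.
  apply/setP => y; rewrite in_setU1; apply/idP/idP => [yS|].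
    have [//|ya] := eqVneq y a.
    by have [x xN yx] := side_children eab yS ya; apply/bigcupP; exists x.
  case/orP => [/eqP -> | /bigcupP [x xN]]; first exact: mem_side.
  exact: subsetP (side_child_sub eab xN) y.
have a_notin : a \notin \bigcup_(x in children a b) side x a.
  by apply/bigcupP => -[x /children_edge exa]; apply/negP; apply: side_notin_parent.
pose F x := if x \in children a b then side x a else set0.
rewrite /wset side_cup big_setU1 //=.
have -> : \bigcup_(x in children a b) side x a = \bigcup_x F x by rewrite big_mkcond.
rewrite partition_disjoint_bigcup => [|x1 x2].
  congr (_ + _); rewrite [RHS]big_mkcond; apply: eq_bigr => x _.
  by rewrite /F; case: ifP => // _; rewrite big_set0.
rewrite /F; case: ifP => [/children_edge e1|_]; last by rewrite -setI_eq0 set0I.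
case: ifP => [/children_edge e2|_] n12; last by rewrite -setI_eq0 setI0.
by apply: sides_disjoint; rewrite // e_sym.
Qed.

Lemma connected_has_edge : (1 < #|V|)%N -> exists x z, e x z.
Proof.
case/card_gt1P=> x [y [_ _ xy]]; case/connectP: (e_connected x y) => [[|z p]] /=.
  by move=> _ yx; rewrite yx eqxx in xy.
by move=> /andP [exz _] _; exists x, z.
Qed.

Lemma exists_heavy_side (R : realFieldType) (w : V -> R) (eta : R) :
  (1 < #|V|)%N -> eta <= wset w [set: V] / 2 ->
  exists p : V * V, e p.1 p.2 && (eta <= wset w (side p.1 p.2)).
Proof.
move=> V_gt1 etaT; have [x [z exz]] := connected_has_edge V_gt1.
have := wset_sides w exz; have [heavy _|light sides] := leP eta (wset w (side x z)).
  by exists (x, z); rewrite exz heavy.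
by exists (z, x); rewrite /= e_sym exz /=; move: etaT; rewrite -sides; lra.
Qed.

Lemma light_side_edge (R : realFieldType) (w : V -> R) (gamma eta : R) :
  (forall v, (deg e v <= 3)%N) ->
  (1 < #|V|)%N ->
  omega_le e w 3 gamma ->
  (forall v : V, (1 <= deg e v)%N -> (w v - gamma) / 2 <= eta) ->
  (forall v : V, (2 <= deg e v)%N -> w v - gamma <= eta) ->
  eta <= wset w [set: V] / 2 ->
  exists u v : V, e u v /\ (eta <= wset w (side u v) <= 2 * eta + gamma).
Proof.
move=> deg_le3 V_gt1 w3 w1 w2 etaT.
pose heavy (p : V * V) := e p.1 p.2 && (eta <= wset w (side p.1 p.2)).
have [p0 heavy_p0] : exists p0, heavy p0 := exists_heavy_side V_gt1 etaT.
case: (arg_minnP (fun p : V * V => #|side p.1 p.2|) heavy_p0) => [[a b]].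
rewrite /heavy /= => /andP [eab heavy_ab] minimal; exists a, b; split => //; rewrite heavy_ab /=.
have light x : x \in children a b -> wset w (side x a) <= eta.
  move=> xN; rewrite leNgt; apply/negP => /ltW heavy_x.
  have := minimal (x, a); rewrite /= (children_edge xN) // heavy_x => /(_ isT).
  by rewrite leqNgt proper_card // side_child_proper.
rewrite wset_side //; apply: (@le_trans _ _ (w a + eta *+ #|children a b|)).
  by rewrite lerD2l -sumr_const; apply: ler_sum.
move: (deg_le3 a) (w1 a) (w2 a) (w3 a); rewrite -(card_children eab).
case: #|children a b| => [|[|[|k]]] deg_a h1 h2 h3; rewrite ?mulr0n ?mulr1n ?mulr2n.
- by have := h1 isT => ?; lra.
- by have := h2 isT => ?; lra.
- by have := h3 isT => ?; lra.
- by [].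
Qed.

End TreeSides.

Lemma deg_le_injective_hom (V B : finType) (e : rel V) (eB : rel B) (f : V -> B) v :
  injective f -> (forall x y, e x y -> eB (f x) (f y)) -> (deg e v <= deg eB (f v))%N.
Proof.
move=> f_inj f_hom; rewrite /deg -(card_imset _ f_inj); apply: subset_leq_card.
by apply/subsetP => _ /imsetP [u uin ->]; rewrite inE f_hom.
Qed.

Lemma binary_tree_deg_le3 (B : finType) (eB : rel B) v :
  binary_tree eB -> (deg eB v <= 3)%N.
Proof. by case=> _ [r [deg_r deg_v]]; have [->|/deg_v []->] := eqVneq v r; rewrite ?deg_r. Qed.

Lemma quasi_binary_deg_le3 (V : finType) (e : rel V) v :
  quasi_binary e -> (deg e v <= 3)%N.
Proof.
case=> _ [B [eB [f [binB f_inj f_hom]]]].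
exact: leq_trans (deg_le_injective_hom v f_inj f_hom) (binary_tree_deg_le3 _ binB).
Qed.

Theorem lemma1 (V : finType) (e : rel V) (R : realFieldType) (w : V -> R)
  (gamma eta : R) :
  quasi_binary e ->
  (1 < #|V|)%N ->
  omega_le e w 3 gamma ->
  (forall v : V, (1 <= deg e v)%N -> (w v - gamma) / 2 <= eta) ->
  (forall v : V, (2 <= deg e v)%N -> w v - gamma <= eta) ->
  eta <= wset w [set: V] / 2 ->
  exists u v : V, e u v /\
    (eta <= wset w (comp_after_removal e u v u) <= 2 * eta + gamma).
Proof.
move=> qb; have [[[e_sym e_irr] e_conn e_acyc] _] := qb.
apply: light_side_edge => // v; exact: quasi_binary_deg_le3.
Qed.
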